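(* For every integer $k\geq 1$ and every integer $n\geq 0$, in $\mathbb{Q}(t)$, $$\sum_{i=k2^{n}}^{k2^{n+1}}\frac{1}{B_i(t)B_{i+1}(t)}=\frac{(2-t)\,S_k(t)}{t^{\,n+\lfloor\log_2 k\rfloor+1}B_k(t)}+\frac{1}{t^{\,n+1}B_k(t)}\left(\frac{1}{B_{k2^{n+1}+1}(t)}+1\right),$$ where the sum runs over all integers $i$ with $k2^n\leq i\leq k2^{n+1}$.
   Context: The Stern polynomials $B_n(t)\in\mathbb{Z}[t]$ are defined by $B_0(t)=0$, $B_1(t)=1$, and for $n\geq 1$: $B_{2n}(t)=tB_n(t)$, $B_{2n+1}(t)=B_n(t)+B_{n+1}(t)$. The polynomials $S_n(t)$, $n\ge1$, are defined by $S_1(t)=S_2(t)=0$ and, for $k\geq 1$, $S_{2k}(t)=tS_k(t)$, $S_{2k+1}(t)=S_k(t)+S_{k+1}(t)+t^{\lfloor\log_2 k\rfloor}$. *)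

From HB Require Import structures.
From mathcomp Require Import all_boot all_order all_algebra.
Set Implicit Arguments. Unset Strict Implicit. Unset Printing Implicit Defensive.
Import Order.TTheory GRing.Theory Num.Theory.
Local Open Scope ring_scope.

(* Fuel-based evaluation of the Stern polynomials; fuel n suffices for B_n. *)
Fixpoint stern_fuel (fuel n : nat) : {poly rat} :=
  match fuel with
  | 0%N => 0
  | f.+1 =>
    if n == 0%N then 0 else if n == 1%N then 1 else
    if odd n then stern_fuel f n./2 + stern_fuel f n./2.+1
    else 'X * stern_fuel f n./2
  end.

Definition stern (n : nat) : {poly rat} := stern_fuel n n.

(* S_n(t), n >= 1 (S_0 is unused; it is set to 0). *)
Fixpoint sternS_fuel (fuel n : nat) : {poly rat} :=
  match fuel with
  | 0%N => 0
  | f.+1 =>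
    if (n <= 2)%N then 0 else
    if odd n then sternS_fuel f n./2 + sternS_fuel f n./2.+1 + 'X ^+ trunc_log 2 n./2
    else 'X * sternS_fuel f n./2
  end.

Definition sternS (n : nat) : {poly rat} := sternS_fuel n n.

Notation Qt := {fraction {poly rat}}.
Definition toQt (p : {poly rat}) : Qt := tofrac p.
Definition tQt : Qt := toQt 'X.

From HB Require Import structures.
From mathcomp Require Import all_boot all_order all_algebra zify ring.
Import GRing.Theory.
Local Open Scope ring_scope.

(* The identity is first proved for arbitrary sequences b, s in a field F
   (section SternSums) that obey the recurrences of B and S:
   b_1 = 1, b_2j = t b_j, b_(2j+1) = b_j + b_(j+1), b_k <> 0 for k > 0, and
   s_1 = 0, s_2j = t s_j, s_(2j+1) = s_j + s_(j+1) + t^L(j) with L = floor(log2).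
   Write f_i = 1/(b_i b_(i+1)).
   1. The normalised sequence q_k = s_k / t^L(k) obeys q_2j = q_j and
      q_(2j+1) = (q_j + q_(j+1) + 1)/t (s vanishes at powers of two, which
      absorbs the jumps of L); by strong induction this yields the cross
      identity (2 - t)(q_(k+1) b_k - q_k b_(k+1)) = 1 - t - b_k + b_(k+1).
   2. Pairs collapse: f_2j + f_(2j+1) = f_j / t.  Hence the window sum
      W(k) = f_k + ... + f_(2k-1) grows by (1 - t) f_k / t from k to k + 1,
      and the cross identity says the closed form ((2 - t) q_k + 1)/(t b_k)
      grows by the same amount, so the two agree.
   3. Pairing repeatedly, the window [k 2^n, k 2^(n+1)) sums to W(k)/t^n;
      adding the last term and b_(k 2^(n+1)) = t^(n+1) b_k gives the identity.
   Finally the fuel-based Stern polynomials are shown to satisfy the recurrences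
   (B_k(2) = k gives B_k <> 0), and the theorem is the instance F = Q(t). *)

Lemma trunc_log2_succ j :
  trunc_log 2 j.+1 = trunc_log 2 j \/ j.+1 = (2 ^ trunc_log 2 j.+1)%N.
Proof.
have lo := trunc_logP (isT : (1 < 2)%N) (isT : (0 < j.+1)%N).
have hi := trunc_log_ltn j.+1 (isT : (1 < 2)%N).
case: (ltnP j (2 ^ trunc_log 2 j.+1)) => h.
  by right; apply/eqP; rewrite eqn_leq lo h.
by left; apply/esym/trunc_log_eq => //; rewrite h (ltn_trans (ltnSn j) hi).
Qed.

Lemma sum_nat_pairs (V : nmodType) (F : nat -> V) a b :
  \sum_(a.*2 <= i < b.*2) F i = \sum_(a <= i < b) (F i.*2 + F i.*2.+1).
Proof.
elim: b => [|b IH]; first by rewrite !big_geq.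
case: (leqP a b) => ab; last by rewrite !big_geq // leq_double.
rewrite doubleS big_nat_recr /=; last by rewrite ltnW // ltnS leq_double.
by rewrite big_nat_recr /= ?leq_double // IH big_nat_recr //= addrA.
Qed.

Section SternSums.

Variables (F : fieldType) (t : F) (b s : nat -> F).
Hypothesis t_neq0 : t != 0.
Hypothesis b1 : b 1 = 1.
Hypothesis b_double : forall j, b j.*2 = t * b j.
Hypothesis b_double1 : forall j, b j.*2.+1 = b j + b j.+1.
Hypothesis b_neq0 : forall k, (0 < k)%N -> b k != 0.
Hypothesis s1 : s 1 = 0.
Hypothesis s_double : forall j, s j.*2 = t * s j.
Hypothesis s_double1 : forall j, (0 < j)%N ->
  s j.*2.+1 = s j + s j.+1 + t ^+ trunc_log 2 j.

Local Notation L k := (trunc_log 2 k).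

Lemma b2 : b 2 = t. Proof. by rewrite -[2%N]/(1.*2)%N b_double b1 mulr1. Qed.

Lemma b_mul_pow2 k m : b (k * 2 ^ m) = t ^+ m * b k.
Proof.
elim: m => [|m IH]; first by rewrite muln1 mul1r.
by rewrite expnS mulnCA mul2n b_double IH exprS mulrA.
Qed.

(* s vanishes at powers of two; this absorbs the jumps of floor(log2). *)
Lemma s_pow2 m : s (2 ^ m) = 0.
Proof.
elim: m => [|m IH]; first exact: s1.
by rewrite expnS mul2n s_double IH mulr0.
Qed.

Definition q (k : nat) : F := s k / t ^+ L k.

Lemma q1 : q 1 = 0. Proof. by rewrite /q s1 mul0r. Qed.

Lemma q_double j : (0 < j)%N -> q j.*2 = q j.
Proof.
move=> j0; rewrite /q s_double trunc_log2_double // exprS.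
by field; rewrite t_neq0 expf_neq0.
Qed.

Lemma q2 : q 2 = 0. Proof. by rewrite -[2%N]/(1.*2)%N q_double // q1. Qed.

Lemma q_double1 j : (0 < j)%N -> q j.*2.+1 = (q j + q j.+1 + 1) / t.
Proof.
move=> j0; have next : s j.+1 / t ^+ L j.+1 = s j.+1 / t ^+ L j.
  by case: (trunc_log2_succ j) => [-> // | ->]; rewrite s_pow2 !mul0r.
have Lodd : L j.*2.+1 = (L j).+1.
  by rewrite (@trunc_log2S j.*2.+1) /= ?uphalf_double //; lia.
rewrite /q next s_double1 // Lodd exprS.
by field; rewrite t_neq0 expf_neq0.
Qed.

Lemma q_cross k : (0 < k)%N ->
  (2%:R - t) * (q k.+1 * b k - q k * b k.+1) = 1 - t - b k + b k.+1.
Proof.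
elim/ltn_ind: k => k IH k0.
case: (ltnP 1 k) => k1; last first.
  have -> : k = 1%N by lia.
  by rewrite q1 q2 b1 b2; ring.
set j := k./2; have j0 : (0 < j)%N by rewrite /j; lia.
have jk : (j < k)%N by rewrite /j; lia.
have IHj := IH j jk j0.
have kE := odd_double_half k; case: (odd k) kE => /= kE; rewrite -kE.
- rewrite -doubleS q_double // q_double1 // b_double b_double1.
  have -> : (q j + q j.+1 + 1) / t * (t * b j.+1) = (q j + q j.+1 + 1) * b j.+1.
    by field.
  have -> : (2%:R - t) * (q j.+1 * (b j + b j.+1) - (q j + q j.+1 + 1) * b j.+1)
          = (2%:R - t) * (q j.+1 * b j - q j * b j.+1) - (2%:R - t) * b j.+1.
    by ring.
  by rewrite IHj; ring.
- rewrite q_double // q_double1 // b_double b_double1.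
  have -> : (q j + q j.+1 + 1) / t * (t * b j) = (q j + q j.+1 + 1) * b j.
    by field.
  have -> : (2%:R - t) * ((q j + q j.+1 + 1) * b j - q j * (b j + b j.+1))
          = (2%:R - t) * (q j.+1 * b j - q j * b j.+1) + (2%:R - t) * b j.
    by ring.
  by rewrite IHj; ring.
Qed.

(* The closed form of the window sum W(k) = sum_{k <= i < 2k} 1/(b_i b_(i+1)). *)
Definition closed_form (k : nat) : F := ((2%:R - t) * q k + 1) / (t * b k).

Lemma closed_form_succ k : (0 < k)%N ->
  closed_form k.+1 = closed_form k + (1 - t) / (t * b k * b k.+1).
Proof.
move=> k0; have bk := b_neq0 _ k0; have bk1 := b_neq0 _ (ltn0Sn k).
apply/eqP; rewrite -subr_eq0; apply/eqP.
have -> : closed_form k.+1 - (closed_form k + (1 - t) / (t * b k * b k.+1))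
        = ((2%:R - t) * (q k.+1 * b k - q k * b k.+1) - (1 - t - b k + b k.+1))
          / (t * b k * b k.+1).
  by rewrite /closed_form; field; rewrite t_neq0 bk bk1.
by rewrite q_cross // subrr mul0r.
Qed.

Local Notation f i := ((b i * b i.+1)^-1).

Lemma f_pair j : (0 < j)%N -> f j.*2 + f j.*2.+1 = f j / t.
Proof.
move=> j0; rewrite -doubleS !b_double b_double1.
have bj := b_neq0 _ j0; have bj1 := b_neq0 _ (ltn0Sn j).
have bs : b j + b j.+1 != 0 by rewrite -b_double1 b_neq0.
by field; rewrite t_neq0 bj bj1 bs.
Qed.

Definition window (m n : nat) : F := \sum_(m <= i < n) f i.

Lemma window_double m n : (0 < m)%N -> window m.*2 n.*2 = window m n / t.
Proof.
move=> m0; rewrite /window sum_nat_pairs big_distrl /=.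
by apply: eq_big_nat => i /andP [mi _]; rewrite f_pair //; lia.
Qed.

Lemma window_pow2 k n : (0 < k)%N ->
  window (k * 2 ^ n) (k * 2 ^ n.+1) = window k k.*2 / t ^+ n.
Proof.
move=> k0; elim: n => [|n IH]; first by rewrite muln1 muln2 divr1.
have pE m : (k * 2 ^ m.+1 = (k * 2 ^ m).*2)%N by rewrite expnS mulnCA mul2n.
rewrite pE [(k * 2 ^ n.+2)%N]pE window_double ?muln_gt0 ?k0 ?expn_gt0 //.
by rewrite IH exprSr invfM mulrA.
Qed.

Lemma window_base k : (0 < k)%N -> window k k.*2 = closed_form k.
Proof.
elim: k => [//|[|k] IH] _.
  rewrite /window big_nat1 /closed_form q1 b1 b2; field; exact: t_neq0.
have k0 : (0 < k.+1)%N by [].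
have bk := b_neq0 _ k0; have bk1 := b_neq0 _ (ltn0Sn k.+1).
rewrite closed_form_succ // -IH // /window doubleS big_nat_recr /=; last by lia.
rewrite big_nat_recr /=; last by lia.
rewrite -addrA f_pair // (@big_ltn _ _ _ k.+1) //=; last by lia.
by field; rewrite t_neq0 bk bk1.
Qed.

Lemma stern_like_sum k n : (0 < k)%N ->
  \sum_(k * 2 ^ n <= i < (k * 2 ^ n.+1).+1) (b i * b i.+1)^-1
  = ((2%:R - t) * s k) / (t ^+ (n + L k).+1 * b k)
    + (t ^+ n.+1 * b k)^-1 * ((b (k * 2 ^ n.+1).+1)^-1 + 1).
Proof.
move=> k0; rewrite big_nat_recr /=; last first.
  by rewrite leq_mul2l expnS leq_pmull ?expn_gt0 ?orbT.
rewrite -/(window _ _) window_pow2 // window_base // b_mul_pow2.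
have bk := b_neq0 _ k0; have bl := b_neq0 _ (ltn0Sn (k * 2 ^ n.+1)).
rewrite /closed_form /q !exprS exprD.
by field; rewrite t_neq0 bk bl !expf_neq0.
Qed.

End SternSums.

Lemma stern_fuel_enough f g n :
  (n <= f)%N -> (n <= g)%N -> stern_fuel f n = stern_fuel g n.
Proof.
elim: f g n => [|f IH] [|g] n /= hf hg.
- by [].
- by move: hf; rewrite leqn0 => /eqP ->.
- by move: hg; rewrite leqn0 => /eqP ->.
case: ifP => // /eqP n0; case: ifP => // /eqP n1.
have hh := odd_double_half n.
case: ifP => od; rewrite od in hh.
- by rewrite (IH g) ?(IH g n./2.+1) //; lia.
- by rewrite (IH g) //; lia.
Qed.

Lemma sternS_fuel_enough f g n :
  (n <= f)%N -> (n <= g)%N -> sternS_fuel f n = sternS_fuel g n.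
Proof.
elim: f g n => [|f IH] [|g] n /= hf hg.
- by [].
- by move: hf; rewrite leqn0 => /eqP ->.
- by move: hg; rewrite leqn0 => /eqP ->.
case: ifP => // n2.
have hh := odd_double_half n.
case: ifP => od; rewrite od in hh.
- by rewrite (IH g) ?(IH g n./2.+1) //; lia.
- by rewrite (IH g) //; lia.
Qed.

(* One step of the fuel-based definitions, as a lemma so that rewriting with it
   does not let simplification unfold the argument further. *)
Lemma stern_fuel_succ f n : stern_fuel f.+1 n =
  if n == 0%N then 0 else if n == 1%N then 1
  else if odd n then stern_fuel f n./2 + stern_fuel f n./2.+1
  else 'X * stern_fuel f n./2.
Proof. by []. Qed.

Lemma sternS_fuel_succ f n : sternS_fuel f.+1 n =
  if (n <= 2)%N then 0
  else if odd n then sternS_fuel f n./2 + sternS_fuel f n./2.+1 + 'X ^+ trunc_log 2 n./2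
  else 'X * sternS_fuel f n./2.
Proof. by []. Qed.

Lemma stern_unfold n : stern n =
  if n == 0%N then 0 else if n == 1%N then 1
  else if odd n then stern n./2 + stern n./2.+1 else 'X * stern n./2.
Proof.
case: n => [//|n]; rewrite /stern stern_fuel_succ; case: ifP => // n1.
have hh := odd_double_half n.+1; case: ifP => od; rewrite od in hh.
- by rewrite (@stern_fuel_enough n n.+1./2) ?(@stern_fuel_enough n n.+1./2.+1) //; lia.
- by rewrite (@stern_fuel_enough n n.+1./2) //; lia.
Qed.

Lemma sternS_unfold n : sternS n =
  if (n <= 2)%N then 0
  else if odd n then sternS n./2 + sternS n./2.+1 + 'X ^+ trunc_log 2 n./2
  else 'X * sternS n./2.
Proof.
case: n => [//|n]; rewrite /sternS sternS_fuel_succ; case: ifP => // n2.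
have hh := odd_double_half n.+1; case: ifP => od; rewrite od in hh.
- by rewrite (@sternS_fuel_enough n n.+1./2) ?(@sternS_fuel_enough n n.+1./2.+1) //; lia.
- by rewrite (@sternS_fuel_enough n n.+1./2) //; lia.
Qed.

Lemma stern1 : stern 1 = 1. Proof. by rewrite stern_unfold. Qed.

Lemma stern_double j : stern j.*2 = 'X * stern j.
Proof.
case: j => [|j]; first by rewrite mulr0.
by rewrite stern_unfold odd_double half_double.
Qed.

Lemma stern_double1 j : stern j.*2.+1 = stern j + stern j.+1.
Proof.
rewrite stern_unfold /= odd_double uphalf_double.
by case: j => [|j] //=; rewrite stern1 add0r.
Qed.

Lemma sternS1 : sternS 1 = 0. Proof. by rewrite sternS_unfold. Qed.

Lemma sternS_double j : sternS j.*2 = 'X * sternS j.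
Proof.
rewrite sternS_unfold odd_double half_double; case: ifP => // j1.
by case: j j1 => [|[|]] //= _; rewrite ?sternS1 mulr0.
Qed.

Lemma sternS_double1 j : (0 < j)%N ->
  sternS j.*2.+1 = sternS j + sternS j.+1 + 'X ^+ trunc_log 2 j.
Proof.
move=> j0; rewrite sternS_unfold /= odd_double uphalf_double ifF //; lia.
Qed.

(* At t = 2 the Stern polynomials evaluate to B_k(2) = k; in particular
   B_k is a nonzero polynomial for k > 0. *)
Lemma stern_at2 k : (stern k).[2%:R] = k%:R :> rat.
Proof.
elim/ltn_ind: k => k IH; rewrite stern_unfold.
case: ifP => [/eqP ->|k0]; first by rewrite hornerC.
case: ifP => [/eqP ->|k1]; first by rewrite hornerC.
have hh := odd_double_half k; case: ifP => od; rewrite od in hh.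
- by rewrite hornerD !IH -?natrD; [congr (_%:R)|..]; lia.
- by rewrite hornerM hornerX IH -?natrM; [congr (_%:R)|]; lia.
Qed.

Lemma stern_neq0 k : (0 < k)%N -> stern k != 0.
Proof.
move=> k0; apply/eqP => h; have := stern_at2 k.
by rewrite h horner0 => /eqP; rewrite eq_sym Num.Theory.pnatr_eq0; lia.
Qed.

HB.instance Definition _ := GRing.RMorphism.copy toQt (@tofrac _).

Theorem mainTheorem15 (k n : nat) (hk : (1 <= k)%N) :
  \sum_(k * 2 ^ n <= i < (k * 2 ^ n.+1).+1)
      (toQt (stern i) * toQt (stern i.+1))^-1
  = ((2%:R - tQt) * toQt (sternS k))
      / (tQt ^+ (n + trunc_log 2 k).+1 * toQt (stern k))
    + (tQt ^+ n.+1 * toQt (stern k))^-1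
      * ((toQt (stern (k * 2 ^ n.+1).+1))^-1 + 1).
Proof.
apply: (@stern_like_sum _ tQt (fun i => toQt (stern i)) (fun i => toQt (sternS i))).
- by rewrite tofrac_eq0 polyX_eq0.
- exact: rmorph1.
- by move=> j /=; rewrite stern_double rmorphM.
- by move=> j /=; rewrite stern_double1 rmorphD.
- by move=> j j0 /=; rewrite tofrac_eq0 stern_neq0.
- exact: rmorph0.
- by move=> j /=; rewrite sternS_double rmorphM.
- by move=> j j0 /=; rewrite sternS_double1 // !rmorphD rmorphXn.
- exact: hk.
Qed.
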